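(* Let $G$ be a finite GVZ-group with $|\mathrm{cd}(G)|=2$. Then for every $\chi\in \mathrm{nl}(G)$, the groups $G/Z(\chi)$, $G/Z(G)$ and $G'/[Z(\chi),G]$ are elementary abelian, and $\exp(G/Z(\chi))=\exp(G/Z(G))=\exp(G'/[Z(\chi),G])$.
   Context: All groups are finite. $\mathrm{Irr}(G)$ is the set of complex irreducible characters of $G$, $\mathrm{nl}(G)$ the set of non-linear irreducible characters, and $\mathrm{cd}(G)=\{\chi(1):\chi\in\mathrm{Irr}(G)\}$. For a character $\chi$, $Z(\chi)=\{g\in G: |\chi(g)|=\chi(1)\}$. A nonabelian group $G$ is a GVZ-group if for every $\chi\in\mathrm{Irr}(G)$ we have $\chi(g)=0$ for all $g\in G\setminus Z(\chi)$. *)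

From mathcomp Require Import all_boot all_order all_algebra all_fingroup all_solvable all_field all_character.
Set Implicit Arguments. Unset Strict Implicit. Unset Printing Implicit Defensive.
Import GroupScope GRing.Theory Num.Theory.
Local Open Scope ring_scope.

(* cd(G) = { chi(1) : chi in Irr(G) }, as a duplicate-free list
   (algC is not a finType, so we use a seq; its size is |cd(G)|) *)
Definition cd (gT : finGroupType) (G : {group gT}) : seq algC :=
  undup [seq 'chi[G]_i 1%g | i : Iirr G].

Definition nonlinear_irr (gT : finGroupType) (G : {group gT}) (i : Iirr G) : Prop :=
  'chi[G]_i 1%g != 1%R.

Definition GVZ (gT : finGroupType) (G : {group gT}) : Prop :=
  ~~ abelian G /\
  forall (i : Iirr G) (g : gT), g \in G -> g \notin 'Z('chi[G]_i)%CF ->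
    'chi[G]_i g = 0%R.

Definition elem_abelian (gT : finGroupType) (A : {set gT}) : Prop :=
  exists p : nat, prime p /\ p.-abelem A.

From mathcomp Require Import all_boot all_order all_algebra all_fingroup all_solvable all_field all_character.
Import GroupScope GRing.Theory Num.Theory.

(* In a GVZ-group every irreducible character chi vanishes off Z(chi), so
   chi(1)^2 = |G : Z(chi)|; when cd(G) = {1, d}, all non-linear chi have
   |G : Z(chi)| = d^2. Hence Z(chi) <= Z(psi) forces equality for non-linear
   chi and psi, and Z(psi) <= ker psi is impossible for non-linear psi (psi
   would vanish off its kernel, so [psi, 1] <> 0).
   A normal subgroup S not containing G' lies in ker psi for some non-linear psi.
   With S = Z(chi) this gives G' <= Z(chi), so x |-> [x, y] is a homomorphism
   modulo ker chi; with S = {z in Z(chi) | z^p in ker chi}, for a prime p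
   dividing |G : Z(chi)|, it gives x^p in Z(chi) for all x in G. Intersecting
   over all chi, G' and G^p lie in Z(G), so G/Z(chi), G/Z(G) and G'/[Z(chi), G]
   are non-trivial elementary abelian p-groups, all of exponent p. *)

Section PowersModulo.

Context {gT : finGroupType}.
Implicit Types (A G H M : {group gT}) (x y : gT).

Lemma mem_coset_eq1 M x : x \in 'N(M) -> (x \in M) = (coset M x == 1).
Proof. by move=> Nx; apply/idP/eqP; [exact: coset_id | exact: coset_idr]. Qed.

Lemma mem_commXg_mod {G M} {x y} n :
    G \subset 'N(M) -> [~: G^`(1), G] \subset M -> x \in G -> y \in G ->
  ([~ x ^+ n, y] \in M) = ([~ x, y] ^+ n \in M).
Proof.
move=> nMG sG'GM Gx Gy; have NM := subsetP nMG.
have cx_xy : commute (coset M x) [~ coset M x, coset M y].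
  apply/commute_sym/commgP; rewrite -!morphR ?NM ?groupR //; apply/eqP/coset_id.
  by rewrite (subsetP sG'GM) // mem_commg // derg1 mem_commg.
have Gxy : [~ x, y] \in G by rewrite groupR.
suff cosetE : coset M [~ x ^+ n, y] = coset M [~ x, y] ^+ n.
  by rewrite !(mem_coset_eq1 M) ?NM ?groupR ?groupX // cosetE morphX ?NM.
by rewrite morphR ?NM ?groupX // morphX ?NM // (commXg _ cx_xy) -morphR ?NM.
Qed.

Lemma group_set_expg_mod {A M} n : A \subset 'N(M) -> [~: A, A] \subset M ->
  group_set [set z in A | z ^+ n \in M].
Proof.
move=> nMA sAAM; have NM := subsetP nMA.
apply/group_setP; split=> [|a b]; first by rewrite inE group1 expg1n group1.
rewrite !inE => /andP[Aa Ma] /andP[Ab Mb]; rewrite groupM //=.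
have cab : commute (coset M a) (coset M b).
  by apply/commgP; rewrite -morphR ?NM //; apply/eqP/coset_id/(subsetP sAAM)/mem_commg.
rewrite (mem_coset_eq1 M) ?NM ?groupX ?groupM // morphX ?morphM ?NM ?groupM //.
by rewrite expgMn // -!morphX -?morphM ?NM ?groupX //; apply/eqP/coset_id/groupM.
Qed.

Lemma norm_expg_mod {A M G} n : G \subset 'N(A) -> G \subset 'N(M) ->
  G \subset 'N([set z in A | z ^+ n \in M]).
Proof.
move=> nAG nMG; apply/normsP=> g Gg; apply/setP=> z.
have [NAg NMg] := (subsetP nAG g Gg, subsetP nMG g Gg).
by rewrite mem_conjg !inE -conjXg !memJ_norm ?groupV.
Qed.

Lemma Cauchy_index {G H} {p : nat} : prime p -> G \subset 'N(H) -> p %| #|G : H| ->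
  exists2 x, x \in G :\: H & x ^+ p \in H.
Proof.
move=> pr_p nHG p_dv.
have /(Cauchy pr_p)[_ /morphimP[x Nx Gx ->] ox] : p %| #|G / H|.
  by rewrite card_quotient.
exists x; last by apply: coset_idr; rewrite ?groupX // morphX // -ox expg_order.
rewrite inE Gx andbT; apply/negP=> Hx.
by move: ox; rewrite /= coset_id // order1 => p1; rewrite -p1 in pr_p.
Qed.

Lemma quotient_expg_abelem {A H} {p : nat} : prime p -> A \subset 'N(H) ->
  A^`(1) \subset H -> {in A, forall x, x ^+ p \in H} -> p.-abelem (A / H).
Proof.
move=> pr_p nHA sA'H pA_H; apply/abelemP => //; split=> [|_ /morphimP[x Nx Ax ->]].
  exact: sub_der1_abelian.
by rewrite -morphX //; apply/coset_id/pA_H.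
Qed.

Lemma quotient_neq1 {A H} : A \subset 'N(H) ->
  (A / H :!=: 1) = ~~ (A \subset H).
Proof. by move=> nHA; rewrite -subG1 quotient_sub1. Qed.

Lemma exponent_abelem {A} {p : nat} : prime p -> p.-abelem A -> A :!=: 1 -> exponent A = p.
Proof.
move=> pr_p; rewrite abelemE // => /andP[_ expA_dv] ntA.
apply/(prime_nt_dvdP pr_p) => //.
by apply: contra ntA => /eqP expA1; rewrite trivg_exponent expA1.
Qed.

End PowersModulo.

Section CharacterCenter.

Context {gT : finGroupType} {G : {group gT}}.
Local Open Scope ring_scope.

Lemma nonlinear_irrE (j : Iirr G) : nonlinear_irr j = ('chi_j \isn't a linear_char).
Proof. by rewrite /nonlinear_irr qualifE/= irr_char. Qed.

Lemma lin_char_cfcenter (xi : 'CF(G)) : xi \is a linear_char -> 'Z(xi)%CF = G.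
Proof.
move=> lin_xi; apply/eqP; rewrite eqEsubset cfcenter_sub; apply/subsetP=> x Gx.
by rewrite char_cfcenterE ?lin_charW // normC_lin_char // lin_char1.
Qed.

Lemma commg_cfcenter_sub_cfker (phi : 'CF(G)) : [~: 'Z(phi)%CF, G] \subset cfker phi.
Proof.
have nKG := normal_norm (cfker_normal phi).
rewrite -quotient_cents2 ?(subset_trans (cfcenter_sub _)) //.
exact: subset_trans (cfcenter_subset_center _) (subsetIr _ _).
Qed.

Lemma mem_irr_cfcenter_comm {j : Iirr G} {x : gT} : x \in G ->
  {in G, forall y, [~ x, y] \in cfker 'chi_j} -> x \in 'Z('chi_j)%CF.
Proof.
move=> Gx cKx; have nKG := normal_norm (cfker_normal 'chi_j).
have Nx := subsetP nKG x Gx.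
suff: coset (cfker 'chi_j) x \in 'Z(G / cfker 'chi_j).
  rewrite -cfcenter_eq_center => /(mem_morphpre Nx).
  by rewrite quotientGK ?cfker_center_normal.
rewrite inE mem_quotient //=; apply/centP=> _ /morphimP[y Ny Gy ->].
by apply/commgP; rewrite -morphR //; apply/eqP/coset_id/cKx.
Qed.

Lemma irr_on_cfker_eq0 (j : Iirr G) : 'chi_j \in 'CF(G, cfker 'chi_j) -> j = 0.
Proof.
move=> chi_on_K; apply/eqP.
have : '['chi_j, 'chi_0] != 0.
  rewrite irr0 (cfdotEl _ chi_on_K) mulf_eq0 invr_eq0 (negbTE (neq0CG G)) /=.
  rewrite (eq_bigr (fun _ => 'chi_j 1%g)) => [|x Kx]; last first.
    by rewrite cfker1 // cfun1E (subsetP (cfker_sub _) x Kx) conjC1 mulr1.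
  by rewrite sumr_const -mulr_natr mulf_neq0 ?irr1_neq0 // pnatr_eq0 -lt0n cardG_gt0.
by rewrite cfdot_irr pnatr_eq0 eqb0 negbK.
Qed.

Lemma nonlinear_irr_cfker_supset {K : {group gT}} : (K <| G)%g ->
  ~~ (G^`(1) \subset K)%g -> exists2 j : Iirr G, nonlinear_irr j & K \subset cfker 'chi_j.
Proof.
move=> nsKG not_sG'K.
have /forallPn[j nlin_j] : ~~ [forall j : Iirr (G / K), 'chi_j \is a linear_char].
  apply: contra not_sG'K => /forallP/char_abelianP.
  exact: der1_min (normal_norm nsKG).
exists (mod_Iirr j); last by rewrite mod_IirrE // cfker_mod.
by rewrite nonlinear_irrE mod_IirrE // cfMod_lin_charE.
Qed.

Lemma nonlinear_der1_quotient_neq1 {j : Iirr G} : nonlinear_irr j ->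
  (G^`(1) / [~: 'Z('chi_j)%CF, G] :!=: 1)%g.
Proof.
move=> nl_j; have nMG := commg_normr G 'Z('chi_j)%CF.
rewrite quotient_neq1 ?(subset_trans (der_sub 1 G) nMG) //.
rewrite nonlinear_irrE lin_irr_der1 in nl_j; apply: contra nl_j => /subset_trans; apply.
exact: commg_cfcenter_sub_cfker.
Qed.

End CharacterCenter.

Section GVZGroup.

Context {gT : finGroupType} {G : {group gT}}.
Hypothesis GVZ_G : GVZ G.

Local Notation Zchi j := ('Z(('chi[G]_j)%R)%CF).
Local Notation Kchi j := (cfker ('chi[G]_j)%R).

Lemma GVZ_irr_on_cfcenter (j : Iirr G) : ('chi_j \in 'CF(G, Zchi j))%R.
Proof.
apply/cfun_onP=> x notZx; have [Gx | /cfun0->//] := boolP (x \in G).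
by case: GVZ_G => _ ->.
Qed.

Lemma GVZ_irr1_sqr (j : Iirr G) : ('chi_j 1%g ^+ 2 = #|G : Zchi j|%:R)%R.
Proof. by apply/eqP; rewrite irr1_bound GVZ_irr_on_cfcenter. Qed.

Lemma GVZ_cfcenter_not_sub_cfker {j : Iirr G} : nonlinear_irr j -> ~~ (Zchi j \subset Kchi j).
Proof.
move=> nl_j; apply/negP=> sZK.
have j0 := irr_on_cfker_eq0 _ (cfun_onS sZK (GVZ_irr_on_cfcenter j)).
by move: nl_j; rewrite /nonlinear_irr j0 irr0 cfun11 eqxx.
Qed.

Hypothesis cdG2 : size (cd G) = 2.

Lemma nonlinear_irr1_eq {i j : Iirr G} : nonlinear_irr i -> nonlinear_irr j ->
  ('chi_i 1%g = 'chi_j 1%g)%R.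
Proof.
move=> nl_i nl_j; apply/eqP/negPn/negP=> neq_ij.
suff: size ([:: 1; 'chi_i 1%g; 'chi_j 1%g])%R <= size (cd G) by rewrite cdG2.
apply: uniq_leq_size; first by rewrite /= !inE negb_or !(eq_sym 1%R) nl_i nl_j neq_ij.
move=> a; rewrite !inE mem_undup => /or3P[] /eqP->; apply/mapP.
- by exists 0%R; rewrite ?mem_enum // irr0 cfun11.
- by exists i; rewrite ?mem_enum.
- by exists j; rewrite ?mem_enum.
Qed.

Lemma nonlinear_cfcenter_index_eq {i j : Iirr G} : nonlinear_irr i -> nonlinear_irr j ->
  #|G : Zchi i| = #|G : Zchi j|.
Proof.
by move=> nl_i nl_j; apply/eqP; rewrite -eqC_nat -!GVZ_irr1_sqr (nonlinear_irr1_eq nl_i nl_j).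
Qed.

Lemma nonlinear_cfcenter_index_gt1 {i : Iirr G} : nonlinear_irr i -> 1 < #|G : Zchi i|.
Proof.
move=> nl_i; rewrite ltn_neqAle indexg_gt0 andbT eq_sym.
apply: contra nl_i => /eqP idx1.
have := GVZ_irr1_sqr i; rewrite idx1 irr1_degree -natrX => /eqP.
by rewrite eqC_nat -mulnn muln_eq1 andbb pnatr_eq1.
Qed.

Lemma nonlinear_cfcenter_eq {i j : Iirr G} : nonlinear_irr i -> nonlinear_irr j ->
  Zchi i \subset Zchi j -> Zchi i = Zchi j.
Proof.
move=> nl_i nl_j sZiZj; apply/eqP; rewrite eqEcard sZiZj /=.
have := Lagrange (cfcenter_sub ('chi_i)%R); have := Lagrange (cfcenter_sub ('chi_j)%R).
rewrite (nonlinear_cfcenter_index_eq nl_i nl_j) => <- /eqP.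
by rewrite eqn_pmul2r ?indexg_gt0 // => /eqP->.
Qed.

Lemma nonlinear_der1_sub_cfcenter {i : Iirr G} : nonlinear_irr i -> G^`(1) \subset Zchi i.
Proof.
move=> nl_i; apply/idPn=> not_sG'Z.
have [j nl_j sZiKj] := nonlinear_irr_cfker_supset (cfcenter_normal _) not_sG'Z.
have sKjZj := normal_sub (cfker_center_normal ('chi_j)%R).
have eqZ := nonlinear_cfcenter_eq nl_i nl_j (subset_trans sZiKj sKjZj).
by have := GVZ_cfcenter_not_sub_cfker nl_j; rewrite -eqZ sZiKj.
Qed.

Lemma nonlinear_mem_commXg_cfker {i : Iirr G} n {x y : gT} : nonlinear_irr i ->
    x \in G -> y \in G ->
  ([~ x ^+ n, y] \in Kchi i) = ([~ x, y] ^+ n \in Kchi i).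
Proof.
move=> nl_i; apply: mem_commXg_mod (normal_norm (cfker_normal _)) _.
apply: subset_trans (commg_cfcenter_sub_cfker _).
exact: commSg (nonlinear_der1_sub_cfcenter nl_i).
Qed.

Lemma nonlinear_der1_expg_cfker {i : Iirr G} p : nonlinear_irr i -> prime p ->
  p %| #|G : Zchi i| -> {in G^`(1), forall c, c ^+ p \in Kchi i}.
Proof.
move=> nl_i pr_p p_dv.
have [nsZG nsKG] := (cfcenter_normal ('chi_i)%R, cfker_normal ('chi_i)%R).
have sZG := normal_sub nsZG; have sZG_K := commg_cfcenter_sub_cfker ('chi_i)%R.
have sG'Z := nonlinear_der1_sub_cfcenter nl_i.
have nKZ := subset_trans sZG (normal_norm nsKG).
pose S := Group (group_set_expg_mod p nKZ (subset_trans (commgS _ sZG) sZG_K)).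
have inS z : (z \in S) = (z \in Zchi i) && (z ^+ p \in Kchi i) by rewrite inE.
suff sG'S : G^`(1) \subset S by move=> c /(subsetP sG'S); rewrite inS => /andP[].
apply/idPn=> not_sG'S.
(* Otherwise S <= ker psi for a non-linear psi, which forces Z(psi) = Z(chi); but
   an x in G \ Z(chi) with x^p in Z(chi) has every [x, y] in S, so x is in Z(psi). *)
have nsSG : S <| G.
  rewrite /normal norm_expg_mod ?normal_norm // andbT.
  by apply/subsetP=> z; rewrite inS => /andP[/(subsetP sZG)].
have [j nl_j sSKj] := nonlinear_irr_cfker_supset nsSG not_sG'S.
have sKS : Kchi i \subset S.
  have sKZ := normal_sub (cfker_center_normal ('chi_i)%R).
  by apply/subsetP=> z Kz; rewrite inS groupX // (subsetP sKZ).
have eqZ : Zchi i = Zchi j.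
  apply: nonlinear_cfcenter_eq nl_i nl_j _; apply/subsetP=> z Zz.
  apply: mem_irr_cfcenter_comm (subsetP sZG z Zz) _ => y Gy.
  by rewrite (subsetP sSKj) // (subsetP sKS) // (subsetP sZG_K) // mem_commg.
have [x /setDP[Gx notZx] xpZ] := Cauchy_index pr_p (normal_norm nsZG) p_dv.
case/negP: notZx; rewrite /= eqZ; apply: (mem_irr_cfcenter_comm Gx) => y Gy.
rewrite (subsetP sSKj) // inS (subsetP sG'Z) ?derg1 ?mem_commg //=.
rewrite -(nonlinear_mem_commXg_cfker _ nl_i) //.
by apply: (subsetP sZG_K); rewrite mem_commg.
Qed.

Lemma nonlinear_expg_cfcenter {i : Iirr G} p : nonlinear_irr i -> prime p ->
  p %| #|G : Zchi i| -> {in G, forall x, x ^+ p \in Zchi i}.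
Proof.
move=> nl_i pr_p p_dv x Gx; apply: mem_irr_cfcenter_comm => [|y Gy]; first exact: groupX.
rewrite (nonlinear_mem_commXg_cfker _ nl_i) //.
by apply: nonlinear_der1_expg_cfker; rewrite // derg1 mem_commg.
Qed.

Lemma der1_sub_cfcenter (j : Iirr G) : G^`(1) \subset Zchi j.
Proof.
have [lin_j | nlin_j] := boolP (('chi_j)%R \is a linear_char).
  by rewrite lin_char_cfcenter ?der_sub.
by apply: nonlinear_der1_sub_cfcenter; rewrite nonlinear_irrE.
Qed.

Lemma der1_sub_center : G^`(1) \subset 'Z(G).
Proof. by rewrite -cap_cfcenter_irr; apply/bigcapsP=> j _; apply: der1_sub_cfcenter. Qed.

Lemma center_quotient_neq1 : G / 'Z(G) :!=: 1.
Proof.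
rewrite quotient_neq1 ?normal_norm ?center_normal //.
by case: GVZ_G => + _; apply: contra => /subset_trans; apply; apply: subsetIr.
Qed.

Lemma cfcenter_quotient_neq1 {i : Iirr G} : nonlinear_irr i -> G / Zchi i :!=: 1.
Proof.
move=> nl_i; rewrite quotient_neq1 ?normal_norm ?cfcenter_normal // -indexg_eq1.
by rewrite gtn_eqF ?nonlinear_cfcenter_index_gt1.
Qed.

Section PrimeExponent.

Context {i : Iirr G} {p : nat}.
Hypotheses (nl_i : nonlinear_irr i) (pr_p : prime p) (p_dv : p %| #|G : Zchi i|).

Lemma expg_cfcenter (j : Iirr G) : {in G, forall x, x ^+ p \in Zchi j}.
Proof.
have [lin_j | nlin_j] := boolP (('chi_j)%R \is a linear_char).
  by move=> x Gx; rewrite lin_char_cfcenter ?groupX.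
rewrite -nonlinear_irrE in nlin_j.
by apply: nonlinear_expg_cfcenter; rewrite // -(nonlinear_cfcenter_index_eq nl_i nlin_j).
Qed.

Lemma expg_center : {in G, forall x, x ^+ p \in 'Z(G)}.
Proof.
by move=> x Gx; rewrite -cap_cfcenter_irr; apply/bigcapP=> j _; apply: expg_cfcenter.
Qed.

Lemma cfcenter_quotient_abelem : p.-abelem (G / Zchi i).
Proof.
apply: quotient_expg_abelem pr_p (normal_norm (cfcenter_normal _)) _ (expg_cfcenter i).
exact: der1_sub_cfcenter.
Qed.

Lemma center_quotient_abelem : p.-abelem (G / 'Z(G)).
Proof.
exact: quotient_expg_abelem pr_p (normal_norm (center_normal G)) der1_sub_center expg_center.
Qed.

Lemma der1_quotient_abelem : p.-abelem (G^`(1) / [~: Zchi i, G]).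
Proof.
have sZG := cfcenter_sub ('chi_i)%R; have sG'Z := der1_sub_cfcenter i.
have nMG : G \subset 'N([~: Zchi i, G]) := commg_normr G _.
have sG'G_M : [~: G^`(1), G] \subset [~: Zchi i, G] := commSg G sG'Z.
apply: quotient_expg_abelem pr_p (subset_trans (der_sub 1 G) nMG) _ _.
  by rewrite [_^`(1)]derg1; apply: subset_trans (commgS _ (der_sub 1 G)) sG'G_M.
pose T := Group (group_set_expg_mod p (subset_trans sZG nMG) (commgS _ sZG)).
suff sG'T : G^`(1) \subset T by move=> c /(subsetP sG'T); rewrite inE => /andP[].
rewrite [G^`(1)]derg1 gen_subG; apply/subsetP=> _ /imset2P[x y Gx Gy ->].
rewrite inE (subsetP sG'Z) ?derg1 ?mem_commg //=.
by rewrite -(mem_commXg_mod p nMG sG'G_M Gx Gy) mem_commg ?expg_cfcenter.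
Qed.

End PrimeExponent.

End GVZGroup.

Theorem mainTheorem1 (gT : finGroupType) (G : {group gT}) :
  GVZ G -> size (cd G) = 2%N ->
  forall i : Iirr G, nonlinear_irr i ->
    [/\ elem_abelian (G / 'Z(('chi[G]_i)%R)%CF)%g,
        elem_abelian (G / 'Z(G))%g,
        elem_abelian (G^`(1) / [~: 'Z(('chi[G]_i)%R)%CF, G])%g,
        exponent (G / 'Z(('chi[G]_i)%R)%CF)%g = exponent (G / 'Z(G))%g &
        exponent (G / 'Z(G))%g = exponent (G^`(1) / [~: 'Z(('chi[G]_i)%R)%CF, G])%g].
Proof.
move=> GVZ_G cdG2 i nl_i.
pose p := pdiv #|G : 'Z(('chi_i)%R)%CF|.
have pr_p : prime p := pdiv_prime (nonlinear_cfcenter_index_gt1 GVZ_G nl_i).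
have p_dv : p %| #|G : 'Z(('chi_i)%R)%CF| := pdiv_dvd _.
have elem (rT : finGroupType) (Q : {group rT}) :
    p.-abelem Q -> Q :!=: 1 -> elem_abelian Q /\ exponent Q = p.
  by move=> abQ ntQ; split; [exists p | apply: exponent_abelem].
have [elem_GZchi ->] := elem _ _ (cfcenter_quotient_abelem GVZ_G cdG2 nl_i pr_p p_dv)
  (cfcenter_quotient_neq1 GVZ_G nl_i).
have [elem_GZ ->] := elem _ _ (center_quotient_abelem GVZ_G cdG2 nl_i pr_p p_dv)
  (center_quotient_neq1 GVZ_G).
have [elem_G'M ->] := elem _ _ (der1_quotient_abelem GVZ_G cdG2 nl_i pr_p p_dv)
  (nonlinear_der1_quotient_neq1 nl_i).
by split.
Qed.
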